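(* Let $\Bbbk$ be a field, $R=\Bbbk[x_1,\dots,x_m]$ with the standard $\mathbb Z^m$-grading, $M$ a finitely generated torsion-free $\mathbb Z^m$-graded $R$-module, and $\mathcal F_\bullet$ a minimal $\mathbb Z^m$-graded free resolution of $M$. Let $C$ be any basis of $F_0$ consisting of homogeneous elements. Then $\mathcal F_\bullet$ has a basis with minimal support $B=\coprod B_n$ consisting of homogeneous elements and such that $B_0=C$.
   Context: For a complex of free modules $\mathcal F_\bullet$ with differentials $f_n$, $f_0\colon F_0\to H_0(\mathcal F_\bullet)$ the canonical projection, and bases $B_n$ of $F_n$, $B=\coprod B_n$: the support of $y=\sum_{c\in B_n}a_cc$ is $\{c\in B_n:a_c\ne0\}$; $y$ is a cycle with minimal support if $y\in\operatorname{Ker}f_n$ and $\operatorname{supp}y$ does not properly contain the support of any nonzero element of $\operatorname{Ker}f_n$; $B$ is a basis with minimal support if $f_n(b)$ is a cycle with minimal support for all $n\ge1$ and $b\in B_n$. A $\mathbb Z^m$-graded free resolution is minimal if its differentials are homogeneous of degree $0$ and $f_n(F_n)\subseteq(x_1,\dots,x_m)F_{n-1}$ for $n\ge1$. *)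

From HB Require Import structures.
From mathcomp Require Import all_boot all_order all_algebra.
Set Implicit Arguments. Unset Strict Implicit. Unset Printing Implicit Defensive.
Import Order.TTheory GRing.Theory Num.Theory.
Local Open Scope ring_scope.

(* The polynomial ring k[x_1,...,x_m], built as iterated univariate polynomials:
   mpoly k 0 = k,  mpoly k (n+1) = (mpoly k n)[x]. *)
Fixpoint mpoly (k : fieldType) (m : nat) : idomainType :=
  match m with
  | 0 => (k : idomainType)
  | n.+1 => ({poly mpoly k n} : idomainType)
  end.

Fixpoint mcoef (k : fieldType) (m : nat) : mpoly k m -> seq nat -> k :=
  match m return mpoly k m -> seq nat -> k with
  | 0 => fun p _ => p
  | n.+1 => fun (p : {poly mpoly k n}) e => mcoef (p`_(head 0%N e)) (behead e)
  end.

Definition degshift (e : seq nat) (d : seq int) : seq int :=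
  [seq (x.1%:Z + x.2)%R | x <- zip e d].

(* A graded free module of rank r: R^r (row vectors), with the i-th standard
   basis vector of multidegree D i (a vector in Z^m, encoded as seq int of size m).
   [homog D a y]: y is homogeneous of multidegree a (standard Z^m-grading). *)
Definition homog (k : fieldType) (m r : nat) (D : 'I_r -> seq int)
  (a : seq int) (y : 'rV[mpoly k m]_r) : Prop :=
  size a = m /\
  forall (j : 'I_r) (e : seq nat), size e = m ->
    mcoef (y 0 j) e != 0 -> degshift e (D j) = a.

Definition homogeneous (k : fieldType) (m r : nat) (D : 'I_r -> seq int)
  (y : 'rV[mpoly k m]_r) : Prop := exists a, homog D a y.

(* A complex F_n = R^(r n), with f_{n+1} : F_{n+1} -> F_n given by v |-> v *m A n.
   [kerF n y]: y lies in Ker f_n, where f_0 : F_0 -> H_0 is the projection,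
   so Ker f_0 = Im f_1. *)
Definition kerF (k : fieldType) (m : nat) (r : nat -> nat)
  (A : forall n, 'M[mpoly k m]_(r n.+1, r n)) (n : nat) : 'rV[mpoly k m]_(r n) -> Prop :=
  match n return 'rV[mpoly k m]_(r n) -> Prop with
  | 0 => fun y => exists w : 'rV[mpoly k m]_(r 1), y = w *m A 0%N
  | n'.+1 => fun y => y *m A n' = 0
  end.

(* Support of y with respect to the basis given by the rows of the invertible
   matrix P. *)
Definition supp (k : fieldType) (m r : nat) (P : 'M[mpoly k m]_r)
  (y : 'rV[mpoly k m]_r) : {set 'I_r} :=
  [set j | (y *m invmx P) 0 j != 0].

Definition min_supp_cycle (k : fieldType) (m : nat) (r : nat -> nat)
  (A : forall n, 'M[mpoly k m]_(r n.+1, r n)) (n : nat)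
  (P : 'M[mpoly k m]_(r n)) (y : 'rV[mpoly k m]_(r n)) : Prop :=
  kerF A y /\
  forall z, kerF A z -> z != 0 -> ~ (supp P z \proper supp P y).

(* Family of bases B n (rows of invertible matrices) is a basis with minimal
   support: f_n(b) is a cycle with minimal support for all n >= 1, b in B_n. *)
Definition min_support_basis (k : fieldType) (m : nat) (r : nat -> nat)
  (A : forall n, 'M[mpoly k m]_(r n.+1, r n)) (B : forall n, 'M[mpoly k m]_(r n)) : Prop :=
  (forall n, B n \in unitmx) /\
  forall n (j : 'I_(r n.+1)), min_supp_cycle A (B n) (row j (B n.+1) *m A n).

From HB Require Import structures.
From mathcomp Require Import all_boot all_order all_algebra.
From mathcomp Require Import zify ring.
From Stdlib Require Import Classical ClassicalEpsilon.
Import GRing.Theory.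
Local Open Scope ring_scope.

Set Implicit Arguments. Unset Strict Implicit. Unset Printing Implicit Defensive.

(* For the fine Z^m-grading every homogeneous polynomial is a scalar times a
   monomial.  Given a homogeneous basis of F_n, start from any homogeneous basis
   of F_(n+1) and replace, one at a time, a basis element b whose boundary f(b)
   is not a cycle of minimal support.  A nonzero cycle z of smaller support can
   be taken homogeneous; the combination of f(b) and z killing one coordinate
   of z is divisible by a monomial, and cancelling it (torsion-freeness of M for
   n = 0, integrality of R for n > 0) gives a homogeneous cycle s = f(h), of the
   degree of b, whose support is strictly inside that of f(b).  The coordinate
   of h on b has degree 0, hence is a constant c; for the scalar mu that kills
   a coordinate of f(b) - mu s, either 1 - mu c = 0 and h replaces b, or b - mu h
   does.  Both keep a homogeneous basis and shrink the support of f(b), so the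
   total support size of the boundaries strictly decreases. *)

Section MonomialCoefficients.
Context {k : fieldType}.

(* Exponent vectors are functions [nat -> nat], of which only the first [m]
   values matter. *)
Fixpoint mcoeff (m : nat) : mpoly k m -> (nat -> nat) -> k :=
  match m return mpoly k m -> (nat -> nat) -> k with
  | 0 => fun p _ => p
  | n.+1 => fun (p : {poly mpoly k n}) e => mcoeff (p`_(e 0%N)) (fun i => e i.+1)
  end.

Fixpoint mconst (m : nat) : k -> mpoly k m :=
  match m return k -> mpoly k m with
  | 0 => fun c => c
  | n.+1 => fun c => ((mconst n c)%:P : {poly mpoly k n})
  end.

Fixpoint mmono (m : nat) : (nat -> nat) -> mpoly k m :=
  match m return (nat -> nat) -> mpoly k m with
  | 0 => fun _ => 1
  | n.+1 => fun e => ('X^(e 0%N) * (mmono n (fun i => e i.+1))%:P : {poly mpoly k n})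
  end.

Fixpoint mexp_le (m : nat) (f e : nat -> nat) : bool :=
  match m with
  | 0 => true
  | n.+1 => (f 0%N <= e 0%N)%N && mexp_le n (fun i => f i.+1) (fun i => e i.+1)
  end.

Lemma mexp_leP m f e : reflect (forall i, (i < m)%N -> (f i <= e i)%N) (mexp_le m f e).
Proof.
elim: m f e => [|n IH] f e /=; first by apply: ReflectT.
apply: (iffP andP) => [[h0 /IH hS] [|i] //= hi|h]; first exact: hS.
by split; [apply: h | apply/IH => i hi; apply: h].
Qed.

Lemma mcoeff_ext m (p : mpoly k m) e e' :
  (forall i, (i < m)%N -> e i = e' i) -> mcoeff p e = mcoeff p e'.
Proof.
elim: m p e e' => [|n IH] p e e' h //=.
by rewrite (h 0%N) //; apply: IH => i hi; apply: h.
Qed.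

Lemma mcoeff_eq0 m (p : mpoly k m) : (forall e, mcoeff p e = 0) -> p = 0.
Proof.
elim: m p => [|n IH] p h; first exact: (h (fun _ => 0%N)).
apply/polyP => i; rewrite coef0; apply: IH => e.
exact: (h (fun j => if j is j'.+1 then e j' else i)).
Qed.

Lemma mcoeff_neq0 m (p : mpoly k m) : p != 0 -> exists e, mcoeff p e != 0.
Proof.
move=> hp; apply: NNPP => hn; move/eqP: hp; apply; apply: mcoeff_eq0 => e.
by apply/eqP; apply: contra_notT hn => he; exists e.
Qed.

Lemma mcoeff0 m e : mcoeff (0 : mpoly k m) e = 0.
Proof. by elim: m e => [|n IH] e //=; rewrite coef0 IH. Qed.

Lemma mcoeffD m (p q : mpoly k m) e : mcoeff (p + q) e = mcoeff p e + mcoeff q e.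
Proof. by elim: m p q e => [|n IH] p q e //=; rewrite coefD IH. Qed.

Lemma mcoeffN m (p : mpoly k m) e : mcoeff (- p) e = - mcoeff p e.
Proof. by elim: m p e => [|n IH] p e //=; rewrite coefN IH. Qed.

Lemma mcoeffB m (p q : mpoly k m) e : mcoeff (p - q) e = mcoeff p e - mcoeff q e.
Proof. by rewrite mcoeffD mcoeffN. Qed.

Lemma mcoeff_sum m I (s : seq I) (P : pred I) (F : I -> mpoly k m) e :
  mcoeff (\sum_(i <- s | P i) F i) e = \sum_(i <- s | P i) mcoeff (F i) e.
Proof.
apply: (big_morph (fun p : mpoly k m => mcoeff p e)) => [p q|]; first exact: mcoeffD.
exact: mcoeff0.
Qed.

Lemma mconst0 m : mconst m 0 = 0.
Proof. by elim: m => [|n IH] //=; rewrite IH. Qed.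

Lemma mconst1 m : mconst m 1 = 1.
Proof. by elim: m => [|n IH] //=; rewrite IH. Qed.

Lemma mconstB m a b : mconst m (a - b) = mconst m a - mconst m b.
Proof. by elim: m => [|n IH] //=; rewrite IH polyCB. Qed.

Lemma mconstM m a b : mconst m (a * b) = mconst m a * mconst m b.
Proof. by elim: m => [|n IH] //=; rewrite IH polyCM. Qed.

Lemma mconst_unit m c : c != 0 -> mconst m c \is a GRing.unit.
Proof.
move=> hc; apply/GRing.unitrP; exists (mconst m c^-1).
by rewrite -!mconstM mulVf ?mulfV // mconst1.
Qed.

Lemma mcoeff_mconstM m c (p : mpoly k m) e : mcoeff (mconst m c * p) e = c * mcoeff p e.
Proof. by elim: m p e => [|n IH] p e //=; rewrite coefCM IH. Qed.

Lemma mcoeff_mmono m f e :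
  mcoeff (mmono m f) e = if mexp_le m f e && mexp_le m e f then 1 else 0.
Proof.
elim: m f e => [|n IH] f e //=.
rewrite coefXnM coefC; case: ltnP => hlt /=; first by rewrite mcoeff0.
rewrite -subn_eq0; case: (e 0%N - f 0%N)%N => [|d] /=; first exact: IH.
by rewrite mcoeff0 andbF.
Qed.

Lemma mcoeff_mulmmono m (p : mpoly k m) f e :
  mcoeff (p * mmono m f) e = if mexp_le m f e then mcoeff p (fun i => e i - f i)%N else 0.
Proof.
elim: m p f e => [|n IH] p f e /=; first by rewrite mulr1.
rewrite mulrA coefMC coefMXn; case: ltnP => hlt /=; first by rewrite mul0r mcoeff0.
by rewrite IH.
Qed.

Lemma mmono_ext m f f' : (forall i, (i < m)%N -> f i = f' i) -> mmono m f = mmono m f'.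
Proof.
elim: m f f' => [|n IH] f f' h //=.
by rewrite (h 0%N) // (IH _ (fun i => f' i.+1)) // => i hi; apply: h.
Qed.

Lemma mmono0 m : mmono m (fun _ => 0%N) = 1.
Proof. by elim: m => [|n IH] //=; rewrite IH mul1r. Qed.

Lemma mmonoD m f g : mmono m (fun i => f i + g i)%N = mmono m f * mmono m g.
Proof. by elim: m f g => [|n IH] f g /=; rewrite ?mulr1 // exprD IH polyCM mulrACA. Qed.

Lemma mmono_neq0 m f : mmono m f != 0.
Proof.
apply/eqP => h; have := mcoeff_mmono m f f; rewrite h mcoeff0.
have hff : mexp_le m f f by apply/mexp_leP.
by rewrite hff /= => /esym/eqP; rewrite oner_eq0.
Qed.

End MonomialCoefficients.

Section FineGrading.
Variables (k : fieldType) (m : nat).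
Local Notation R := (mpoly k m).
Implicit Types (d x : nat -> int) (e : nat -> nat) (p q : R).

(* Multidegrees are functions [nat -> int] read on their first [m] values.
   A polynomial [p] sitting at a coordinate of degree shift [d] has
   multidegree [x] when each of its monomials [x^e] satisfies [e + d = x]. *)
Definition has_mdeg d x e : bool := all (fun i => (e i)%:Z + d i == x i) (iota 0 m).

Definition homp d x p : Prop := forall e, mcoeff p e != 0 -> has_mdeg d x e.

Definition mdeg_le d x : bool := all (fun i => 0 <= x i - d i) (iota 0 m).

Definition mexpo d x : nat -> nat := fun i => `|x i - d i|%N.

Definition hcomp d x p : R :=
  if mdeg_le d x then mconst m (mcoeff p (mexpo d x)) * mmono m (mexpo d x) else 0.

Lemma has_mdegP d x e :
  reflect (forall i, (i < m)%N -> (e i)%:Z + d i = x i) (has_mdeg d x e).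
Proof.
apply: (iffP allP) => h i hi; first by apply/eqP; apply: h; rewrite mem_iota.
by rewrite mem_iota in hi; apply/eqP; apply: h.
Qed.

Lemma mdeg_leP d x : reflect (forall i, (i < m)%N -> 0 <= x i - d i) (mdeg_le d x).
Proof.
apply: (iffP allP) => h i hi; first by apply: h; rewrite mem_iota.
by rewrite mem_iota in hi; apply: h.
Qed.

Lemma mcoeff_hcomp d x p e :
  mcoeff (hcomp d x p) e = if has_mdeg d x e then mcoeff p e else 0.
Proof.
rewrite /hcomp; case: (mdeg_leP d x) => [hle|hnle]; last first.
  rewrite mcoeff0; case: has_mdegP => // hd; case: hnle => i hi.
  by have := hd i hi; lia.
rewrite mcoeff_mconstM mcoeff_mmono; case: has_mdegP => [hd|hnd].
  have he i : (i < m)%N -> mexpo d x i = e i.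
    by move=> hi; have := hd i hi; rewrite /mexpo; lia.
  have -> : mexp_le m (mexpo d x) e by apply/mexp_leP => i hi; rewrite he.
  have -> : mexp_le m e (mexpo d x) by apply/mexp_leP => i hi; rewrite he.
  by rewrite mulr1; apply: mcoeff_ext.
case: mexp_leP => /= h1; last by rewrite mulr0.
case: mexp_leP => h2; last by rewrite mulr0.
case: hnd => i hi; have := h1 i hi; have := h2 i hi; have := hle i hi; rewrite /mexpo; lia.
Qed.

Lemma homp0 d x : homp d x 0.
Proof. by move=> e; rewrite mcoeff0 eqxx. Qed.

Lemma hcomp_id d x p : homp d x p -> hcomp d x p = p.
Proof.
move=> h; apply/eqP; rewrite -subr_eq0; apply/eqP; apply: mcoeff_eq0 => e.
rewrite mcoeffB mcoeff_hcomp; case hd: (has_mdeg d x e); first by rewrite subrr.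
case: (eqVneq (mcoeff p e) 0) => [->|/h]; first by rewrite subrr.
by rewrite hd.
Qed.

Lemma homp_hcomp d x p : homp d x (hcomp d x p).
Proof. by move=> e; rewrite mcoeff_hcomp; case: has_mdeg; rewrite ?eqxx. Qed.

Lemma hcomp0 d x : hcomp d x 0 = 0.
Proof. by apply: hcomp_id; apply: homp0. Qed.

Lemma homp_mdeg_le d x p : homp d x p -> p != 0 -> mdeg_le d x.
Proof. by move=> h; rewrite -{1}(hcomp_id h) /hcomp; case: mdeg_le; rewrite ?eqxx. Qed.

Lemma homp_monomial d x p :
  homp d x p -> p = mconst m (mcoeff p (mexpo d x)) * mmono m (mexpo d x).
Proof.
move=> h; case: (eqVneq p 0) => [->|hp]; first by rewrite mcoeff0 mconst0 mul0r.
by rewrite -{1}(hcomp_id h) /hcomp (homp_mdeg_le h hp).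
Qed.

Lemma homp_mconstM_mmono d x (c : k) :
  mdeg_le d x -> homp d x (mconst m c * mmono m (mexpo d x)).
Proof.
move=> hle; set p := mconst m c * mmono m (mexpo d x).
have hll : mexp_le m (mexpo d x) (mexpo d x) by apply/mexp_leP.
have <- : hcomp d x p = p by rewrite /hcomp hle mcoeff_mconstM mcoeff_mmono hll mulr1.
exact: homp_hcomp.
Qed.

Lemma homp_const d p : homp d d p -> p = mconst m (mcoeff p (fun _ => 0%N)).
Proof.
have hexpo : forall i, (i < m)%N -> mexpo d d i = 0%N by move=> i _; rewrite /mexpo subrr.
move=> h; rewrite {1}(homp_monomial h) (mmono_ext hexpo) mmono0 mulr1.
by congr mconst; apply: mcoeff_ext.
Qed.

Lemma mcoeff_mul_homp d x p q e : homp d x q ->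
  mcoeff (p * q) e = if mdeg_le d x && mexp_le m (mexpo d x) e
                     then mcoeff q (mexpo d x) * mcoeff p (fun i => e i - mexpo d x i)%N
                     else 0.
Proof.
move=> hq; rewrite -{1}(hcomp_id hq) /hcomp.
case: mdeg_le => /=; last by rewrite mulr0 mcoeff0.
by rewrite mulrCA mcoeff_mconstM mcoeff_mulmmono; case: mexp_le; rewrite ?mulr0.
Qed.

Lemma has_mdeg_sub d d' x e : mdeg_le d d' -> mexp_le m (mexpo d d') e ->
  has_mdeg d' x (fun i => e i - mexpo d d' i)%N = has_mdeg d x e.
Proof.
move=> /mdeg_leP hle /mexp_leP hl.
by apply/has_mdegP/has_mdegP => h i hi; have := h i hi; have := hl i hi;
  have := hle i hi; rewrite /mexpo; lia.
Qed.

End FineGrading.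

Section HomogeneousRows.
Variables (k : fieldType) (m : nat).
Local Notation R := (mpoly k m).
Implicit Types (x a : nat -> int).

Definition homV q (G : 'I_q -> nat -> int) x (y : 'rV[R]_q) : Prop :=
  forall j, homp (G j) x (y 0 j).

Definition hcompV q (G : 'I_q -> nat -> int) x (y : 'rV[R]_q) : 'rV[R]_q :=
  \row_j hcomp (G j) x (y 0 j).

Definition same_mdeg x x' : Prop := forall i, (i < m)%N -> x i = x' i.

Lemma rowV_neq0 q (y : 'rV[R]_q) : y != 0 -> exists j, y 0 j != 0.
Proof.
move=> hy; apply/existsP; apply: contraNT hy => /existsPn hz.
by apply/eqP/rowP => j; rewrite mxE; apply/eqP/negPn/hz.
Qed.

Lemma hcompV_mulmx q s (G : 'I_s -> nat -> int) (H : 'I_q -> nat -> int)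
  (M : 'M[R]_(q, s)) (u : 'rV[R]_q) x :
  (forall i, homV G (H i) (row i M)) -> hcompV G x (u *m M) = hcompV H x u *m M.
Proof.
move=> hM; apply/rowP => j; rewrite !mxE.
apply/eqP; rewrite -subr_eq0; apply/eqP; apply: mcoeff_eq0 => e.
have hMij i : homp (G j) (H i) (M i j) by have := hM i j; rewrite mxE.
rewrite mcoeffB mcoeff_hcomp !mcoeff_sum; case hd: (has_mdeg m (G j) x e).
  rewrite -sumrB; apply: big1 => i _; rewrite mxE !(mcoeff_mul_homp _ _ (hMij i)).
  case: andP => [[hle hl]|_]; last by rewrite subrr.
  by rewrite mcoeff_hcomp has_mdeg_sub // hd subrr.
rewrite sub0r big1 ?oppr0 // => i _.
rewrite mxE !(mcoeff_mul_homp _ _ (hMij i)).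
case: andP => [[hle hl]|_] //.
by rewrite mcoeff_hcomp has_mdeg_sub // hd mulr0.
Qed.

Lemma homV_hcompV_same_mdeg q (G : 'I_q -> nat -> int) x x' y :
  homV G x y -> hcompV G x' y != 0 -> same_mdeg x' x.
Proof.
move=> hy /rowV_neq0 [j]; rewrite mxE => /mcoeff_neq0 [e]; rewrite mcoeff_hcomp.
case: has_mdegP => [hd' /hy /has_mdegP hd|_]; last by rewrite eqxx.
by move=> i hi; rewrite -(hd i hi) -(hd' i hi).
Qed.

Lemma homV_by_hcompV q (G : 'I_q -> nat -> int) x y :
  (forall x', hcompV G x' y != 0 -> same_mdeg x' x) -> homV G x y.
Proof.
move=> h j e he; pose x' i := (e i)%:Z + G j i.
have hx'e : has_mdeg m (G j) x' e by apply/has_mdegP.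
have hc : hcompV G x' y != 0.
  apply: contra he => /eqP /rowP /(_ j); rewrite !mxE => hz.
  by have := mcoeff_hcomp (G j) x' (y 0 j) e; rewrite hz mcoeff0 hx'e => <-.
by apply/has_mdegP => i hi; rewrite -(h _ hc i hi).
Qed.

Lemma hcompV_id q (G : 'I_q -> nat -> int) x y : homV G x y -> hcompV G x y = y.
Proof. by move=> h; apply/rowP => j; rewrite mxE hcomp_id. Qed.

Lemma homV_hcompV q (G : 'I_q -> nat -> int) x y : homV G x (hcompV G x y).
Proof. by move=> j; rewrite mxE; apply: homp_hcomp. Qed.

Lemma hcompV0 q (G : 'I_q -> nat -> int) x : hcompV G x 0 = 0.
Proof. by apply/rowP => j; rewrite !mxE hcomp0. Qed.

Lemma hcompV_entry_eq0 q (G : 'I_q -> nat -> int) x (y : 'rV[R]_q) j :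
  y 0 j = 0 -> hcompV G x y 0 j = 0.
Proof. by move=> h; rewrite mxE h hcomp0. Qed.

Lemma hcompV_neq0 q (G : 'I_q -> nat -> int) (y : 'rV[R]_q) :
  y != 0 -> exists x, hcompV G x y != 0.
Proof.
move=> /rowV_neq0 [j /mcoeff_neq0 [e he]]; pose x i := (e i)%:Z + G j i; exists x.
apply: contra he => /eqP /rowP /(_ j); rewrite !mxE => hz.
have hd : has_mdeg m (G j) x e by apply/has_mdegP.
by have := mcoeff_hcomp (G j) x (y 0 j) e; rewrite hz mcoeff0 hd => <-.
Qed.

Lemma homV_mulmx q s (G : 'I_s -> nat -> int) (H : 'I_q -> nat -> int)
  (M : 'M[R]_(q, s)) (u : 'rV[R]_q) a :
  (forall i, homV G (H i) (row i M)) -> homV H a u -> homV G a (u *m M).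
Proof.
move=> hM hu; apply: homV_by_hcompV => x'; rewrite (hcompV_mulmx _ _ hM).
case: (eqVneq (hcompV H x' u) 0) => [->|hc]; first by rewrite mul0mx eqxx.
by move=> _; apply: homV_hcompV_same_mdeg hu hc.
Qed.

Lemma homV_coord q (G H : 'I_q -> nat -> int) (P : 'M[R]_q) (u : 'rV[R]_q) a :
  P \in unitmx -> (forall i, homV G (H i) (row i P)) -> homV G a (u *m P) -> homV H a u.
Proof.
move=> hP hr hy; apply: homV_by_hcompV => x' hc; apply: (homV_hcompV_same_mdeg hy).
rewrite (hcompV_mulmx _ _ hr); apply: contra hc => /eqP h.
by rewrite -(mulmxK hP (hcompV H x' u)) h mul0mx.
Qed.

Lemma homV_add q (G : 'I_q -> nat -> int) x (y1 y2 : 'rV[R]_q) :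
  homV G x y1 -> homV G x y2 -> homV G x (y1 + y2).
Proof.
move=> h1 h2 j e; rewrite mxE mcoeffD.
case: (eqVneq (mcoeff (y1 0 j) e) 0) => [->|]; [rewrite add0r; apply: h2 | by move=> /h1].
Qed.

Lemma homV_opp q (G : 'I_q -> nat -> int) x (y : 'rV[R]_q) : homV G x y -> homV G x (- y).
Proof. by move=> h j e; rewrite mxE mcoeffN oppr_eq0; apply: h. Qed.

Lemma homV_mconstZ q (G : 'I_q -> nat -> int) x c (y : 'rV[R]_q) :
  homV G x y -> homV G x (mconst m c *: y).
Proof. by move=> h j e; rewrite mxE mcoeff_mconstM mulf_eq0 negb_or => /andP [_ /h]. Qed.

(* Homogeneous entries are scalar multiples of monomials: entry [i] of the
   combination has exponent [(x - dl i0) + (a - dl i)], and [a - dl i] is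
   nonnegative as soon as [u 0 i != 0]. *)
Lemma homV_eliminate q (dl : 'I_q -> nat -> int) a x (u v : 'rV[R]_q) i0 :
  homV dl a u -> homV dl x v -> (forall i, v 0 i != 0 -> u 0 i != 0) -> v 0 i0 != 0 ->
  exists2 s, homV dl a s & mmono m (mexpo (dl i0) x) *: s = v 0 i0 *: u - u 0 i0 *: v.
Proof.
move=> hu hv hvu hv0; have hu0 := hvu _ hv0.
move/mdeg_leP: (homp_mdeg_le (hv i0) hv0) => hx0.
move/mdeg_leP: (homp_mdeg_le (hu i0) hu0) => ha0.
set be := mexpo (dl i0) x; set al := mexpo (dl i0) a.
set c1 := mcoeff (v 0 i0) be; set c3 := mcoeff (u 0 i0) al.
pose c2 i := mcoeff (u 0 i) (mexpo (dl i) a).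
pose c4 i := mcoeff (v 0 i) (mexpo (dl i) x).
exists (\row_i if mdeg_le m (dl i) a
    then mconst m (c1 * c2 i - c3 * c4 i) * mmono m (mexpo (dl i) a) else 0).
  move=> i; rewrite mxE; case: ifP => [|_]; [exact: homp_mconstM_mmono | exact: homp0].
apply/rowP => i; rewrite !mxE.
case: (eqVneq (u 0 i) 0) => [hui|hui].
  have hvi : v 0 i = 0 by apply/eqP/negPn/negP => /hvu; rewrite hui eqxx.
  by rewrite /c2 /c4 hui hvi !mcoeff0 !mulr0 !subrr mconst0 mul0r; case: ifP; rewrite mulr0.
rewrite (homp_mdeg_le (hu i) hui).
have -> : v 0 i0 * u 0 i - u 0 i0 * v 0 i =
    mconst m c1 * mmono m be * (mconst m (c2 i) * mmono m (mexpo (dl i) a))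
    - mconst m c3 * mmono m al * (mconst m (c4 i) * mmono m (mexpo (dl i) x)).
  by rewrite -(homp_monomial (hv i0)) -(homp_monomial (hu i0))
             -(homp_monomial (hu i)) -(homp_monomial (hv i)).
case: (eqVneq (v 0 i) 0) => [hvi|hvi].
  rewrite /c4 hvi mcoeff0 mulr0 subr0 mconst0 mul0r mulr0 subr0 mconstM; ring.
move/mdeg_leP: (homp_mdeg_le (hv i) hvi) => hxi.
move/mdeg_leP: (homp_mdeg_le (hu i) hui) => hai.
have hmono :
    mmono m al * mmono m (mexpo (dl i) x) = mmono m be * mmono m (mexpo (dl i) a) :> R.
  rewrite -!mmonoD; apply: mmono_ext => l hl.
  have := hx0 l hl; have := ha0 l hl; have := hxi l hl; have := hai l hl.
  by rewrite /be /al /mexpo; lia.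
have -> : mconst m c3 * mmono m al * (mconst m (c4 i) * mmono m (mexpo (dl i) x)) =
    mconst m c3 * mconst m (c4 i) * (mmono m al * mmono m (mexpo (dl i) x)) by ring.
rewrite hmono mconstB !mconstM; ring.
Qed.

Lemma homV_row1 q (G : 'I_q -> nat -> int) i : homV G (G i) (row i (1%:M : 'M[R]_q)).
Proof.
move=> j; rewrite !mxE; case: eqP => [<-|_]; last by rewrite mulr0n; apply: homp0.
have hle : mdeg_le m (G i) (G i) by apply/mdeg_leP => l _; rewrite subrr.
have := @homp_mconstM_mmono k m _ _ 1 hle; rewrite mconst1 mul1r.
by rewrite (mmono_ext (f' := fun _ => 0%N)) ?mmono0 // => l _; rewrite /mexpo subrr.
Qed.

End HomogeneousRows.

Section RowReplacement.
Variable R : comUnitRingType.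

Definition row_repl q (Q : 'M[R]_q) j (w : 'rV[R]_q) : 'M[R]_q :=
  \matrix_i (if i == j then w else row i Q).

Lemma det_row_repl1 q j (w : 'rV[R]_q) : \det (row_repl 1%:M j w) = w 0 j.
Proof.
rewrite (expand_det_col _ j) (bigD1 j) //= big1 ?addr0 => [|i hij].
  rewrite /cofactor !mxE eqxx -signr_odd addnn odd_double mul1r.
  have -> : row' j (col' j (row_repl 1%:M j w)) = 1%:M.
    apply/matrixP => a b; rewrite !mxE eq_sym (negPf (neq_lift j a)) !mxE.
    by rewrite (inj_eq lift_inj).
  by rewrite det1 mulr1.
by rewrite !mxE (negPf hij) !mxE (negPf hij) mul0r.
Qed.

Lemma row_repl_mulmx q (Q : 'M[R]_q) j w : Q \in unitmx ->
  row_repl Q j w = row_repl 1%:M j (w *m invmx Q) *m Q.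
Proof.
move=> hQ; apply/row_matrixP => i; rewrite row_mul !rowK.
by case: eqP => _; [rewrite mulmxKV | rewrite -row_mul mul1mx].
Qed.

Lemma row_repl_unit q (Q : 'M[R]_q) j w : Q \in unitmx ->
  (w *m invmx Q) 0 j \is a GRing.unit -> row_repl Q j w \in unitmx.
Proof.
by move=> hQ hu; rewrite row_repl_mulmx // unitmx_mul hQ andbT unitmxE det_row_repl1.
Qed.

End RowReplacement.

Lemma nz_entries_proper (R : nzRingType) q (t u : 'rV[R]_q) i0 :
  (forall i, t 0 i != 0 -> u 0 i != 0) -> u 0 i0 != 0 -> t 0 i0 = 0 ->
  [set i | t 0 i != 0] \proper [set i | u 0 i != 0].
Proof.
move=> htu hu0 ht0; apply/properP; split.
  by apply/subsetP => i; rewrite !inE; apply: htu.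
by exists i0; rewrite !inE ?ht0 ?eqxx.
Qed.

Lemma supp_mulmx (R : fieldType) m q (P : 'M[mpoly R m]_q) (s : 'rV_q) :
  P \in unitmx -> supp P (s *m P) = [set i | s 0 i != 0].
Proof. by move=> hP; apply/setP => i; rewrite !inE mulmxK. Qed.

Section Resolution.
Unset Implicit Arguments.
Variables (k : fieldType) (m : nat) (r : nat -> nat).
Variable D : forall n, 'I_(r n) -> seq int.
Variable A : forall n, 'M[mpoly k m]_(r n.+1, r n).
Local Notation R := (mpoly k m).

Definition shift n : 'I_(r n) -> nat -> int := fun j i => nth 0 (@D n j) i.

Hypothesis homV_A : forall n i, homV (shift n) (shift n.+1 i) (row i (A n)).
Hypothesis exact_A : forall n (v : 'rV[R]_(r n.+1)),
  v *m A n = 0 -> exists w : 'rV[R]_(r n.+2), v = w *m A n.+1.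
Hypothesis complex_A : forall n, A n.+1 *m A n = 0.
Hypothesis torsionfree_A : forall (c : R) (v : 'rV[R]_(r 0%N)), c != 0 ->
  (exists w : 'rV[R]_(r 1%N), c *: v = w *m A 0%N) ->
  exists w : 'rV[R]_(r 1%N), v = w *m A 0%N.
Set Implicit Arguments.

Lemma kerF_add n (y1 y2 : 'rV[R]_(r n)) : kerF A y1 -> kerF A y2 -> kerF A (y1 + y2).
Proof.
case: n y1 y2 => [|n] y1 y2 /=; last by move=> h1 h2; rewrite mulmxDl h1 h2 addr0.
by move=> [w1 ->] [w2 ->]; exists (w1 + w2); rewrite mulmxDl.
Qed.

Lemma kerFZ n c (y : 'rV[R]_(r n)) : kerF A y -> kerF A (c *: y).
Proof.
case: n y => [|n] y /=; last by move=> h; rewrite -scalemxAl h scaler0.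
by move=> [w ->]; exists (c *: w); rewrite scalemxAl.
Qed.

Lemma kerF_sub n (y1 y2 : 'rV[R]_(r n)) : kerF A y1 -> kerF A y2 -> kerF A (y1 - y2).
Proof. by move=> h1 h2; rewrite -scaleN1r; apply: kerF_add h1 (kerFZ _ h2). Qed.

Lemma kerFZ_inv n c (y : 'rV[R]_(r n)) : c != 0 -> kerF A (c *: y) -> kerF A y.
Proof.
case: n y => [|n] y /= hc; first exact: torsionfree_A.
by rewrite -scalemxAl => /eqP; rewrite scalemx_eq0 (negPf hc) => /eqP.
Qed.

Lemma kerF_hcompV n x (z : 'rV[R]_(r n)) : kerF A z -> kerF A (hcompV (shift n) x z).
Proof.
case: n z => [|n] z /=.
  move=> [w ->]; exists (hcompV (shift 1%N) x w).
  by rewrite (hcompV_mulmx _ _ (homV_A 0%N)).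
by move=> h; rewrite -(hcompV_mulmx _ _ (homV_A n)) h hcompV0.
Qed.

Lemma kerF_image n (y : 'rV[R]_(r n)) :
  kerF A y -> exists h : 'rV[R]_(r n.+1), y = h *m A n.
Proof. by case: n y => [|n] y //=; apply: exact_A. Qed.

Lemma kerF_mulmx n (w : 'rV[R]_(r n.+1)) : kerF A (w *m A n).
Proof. by case: n w => [|n] w /=; [exists w | rewrite -mulmxA complex_A mulmx0]. Qed.

Lemma nonminimal_cycle_shrink n (P : 'M[R]_(r n)) dl (y : 'rV[R]_(r n)) a :
  P \in unitmx -> (forall i, homV (shift n) (dl i) (row i P)) -> homV (shift n) a y ->
  kerF A y -> ~ min_supp_cycle A P y ->
  exists s : 'rV[R]_(r n), [/\ homV dl a s, kerF A (s *m P), s != 0,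
    forall i, s 0 i != 0 -> (y *m invmx P) 0 i != 0 &
    exists2 i0, (y *m invmx P) 0 i0 != 0 & s 0 i0 = 0].
Proof.
move=> hP hrow hy hky hnm; set u := y *m invmx P.
have hyu : y = u *m P by rewrite mulmxKV.
have hu : homV dl a u by apply: (homV_coord hP hrow); rewrite -hyu.
have [z [hkz hz0 hzy]] : exists z, [/\ kerF A z, z != 0 & supp P z \proper supp P y].
  apply: NNPP => hn; apply: hnm; split => // z hkz hz hpr; apply: hn; by exists z.
move/properP: hzy => [hsub [i1 hi1y hi1z]].
have [x hx] := hcompV_neq0 (shift n) hz0.
set v := hcompV dl x (z *m invmx P).
have hvz : v *m P = hcompV (shift n) x z by rewrite -(hcompV_mulmx _ _ hrow) mulmxKV.
have hv0 : v != 0 by apply: contra hx => /eqP hv0; rewrite -hvz hv0 mul0mx.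
have hvu i : v 0 i != 0 -> u 0 i != 0.
  move=> hvi; have : i \in supp P z.
    by rewrite inE; apply: contra hvi => /eqP /hcompV_entry_eq0 ->.
  by move/(subsetP hsub); rewrite inE.
have hu1 : u 0 i1 != 0 by move: hi1y; rewrite inE.
have hv1 : v 0 i1 = 0 by apply: hcompV_entry_eq0; move: hi1z; rewrite inE negbK => /eqP.
have [i0 hvi0] := rowV_neq0 hv0.
have hv : homV dl x v by apply: homV_hcompV.
have [s hs hsuv] := homV_eliminate hu hv hvu hvi0.
move: hsuv; set mu := mmono m _ => hsuv.
have hsi i : mu * s 0 i = v 0 i0 * u 0 i - u 0 i0 * v 0 i.
  by move/rowP/(_ i): hsuv; rewrite !mxE.
have hmu_eq0 i : mu * s 0 i = 0 -> s 0 i = 0.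
  by move/eqP; rewrite mulf_eq0 (negPf (mmono_neq0 _ _)) => /eqP.
exists s; split => //.
- apply: (kerFZ_inv (mmono_neq0 m (mexpo (dl i0) x))).
  rewrite -/mu scalemxAl hsuv mulmxBl -!scalemxAl -hyu hvz.
  by apply: kerF_sub; apply: kerFZ => //; apply: kerF_hcompV.
- apply/eqP => hs0; move: (hsi i1); rewrite hs0 mxE mulr0 hv1 mulr0 subr0.
  by move/esym/eqP; rewrite mulf_eq0 (negPf hvi0) (negPf hu1).
- move=> i; apply: contraNneq => hui; apply/eqP/hmu_eq0; rewrite hsi hui.
  have hvi : v 0 i = 0 by apply/eqP/negPn/negP => /hvu; rewrite hui eqxx.
  by rewrite hvi !mulr0 subrr.
- by exists i0; [apply: hvu | apply: hmu_eq0; rewrite hsi mulrC subrr].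
Qed.

Lemma nonminimal_row_replace n (P : 'M[R]_(r n)) dl (Q : 'M[R]_(r n.+1)) ep j :
  P \in unitmx -> (forall i, homV (shift n) (dl i) (row i P)) ->
  Q \in unitmx -> (forall i, homV (shift n.+1) (ep i) (row i Q)) ->
  ~ min_supp_cycle A P (row j Q *m A n) ->
  exists w : 'rV[R]_(r n.+1), [/\ homV (shift n.+1) (ep j) w, row_repl Q j w \in unitmx &
    supp P (w *m A n) \proper supp P (row j Q *m A n)].
Proof.
move=> hP hrP hQ hrQ hnm; set a := ep j; set y := row j Q *m A n.
have hy : homV (shift n) a y := homV_mulmx (homV_A n) (hrQ j).
have [s [hs hsP hs0 hsu [i0 hu0 hs00]]] :=
  nonminimal_cycle_shrink hP hrP hy (kerF_mulmx _) hnm.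
have [u hyu] : exists u, y *m invmx P = u by eexists.
rewrite hyu in hsu hu0.
have hu : homV dl a u by apply: (homV_coord hP hrP); rewrite -hyu mulmxKV.
have [h0 hh0] := kerF_image hsP.
set h := hcompV (shift n.+1) a h0.
have hh : homV (shift n.+1) a h by apply: homV_hcompV.
have hhs : h *m A n = s *m P.
  by rewrite -(hcompV_mulmx _ _ (homV_A n)) -hh0 hcompV_id //; apply: homV_mulmx hrP hs.
have [g hhg] : exists g, h *m invmx Q = g by exists (h *m invmx Q).
have hg : homV ep a g by apply: (homV_coord hQ hrQ); rewrite -hhg mulmxKV.
(* [h] and the [j]-th basis vector have the same degree, so the [j]-th
   coordinate of [h] is a constant *)
have hgj := homp_const (hg j); set cg := mcoeff (g 0 j) _ in hgj.
have [i1 hi1] := rowV_neq0 hs0.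
set f := mexpo (dl i1) a.
set mu := mcoeff (u 0 i1) f / mcoeff (s 0 i1) f.
have hkill : u 0 i1 - mconst m mu * s 0 i1 = 0.
  have hcs : mcoeff (s 0 i1) f != 0.
    by apply: contra hi1 => /eqP hc; rewrite (homp_monomial (hs i1)) -/f hc mconst0 mul0r.
  rewrite (homp_monomial (hu i1)) (homp_monomial (hs i1)) -/f.
  by rewrite mulrA -mconstM /mu divfK // subrr.
case: (eqVneq (1 - mu * cg) 0) => hcase.
  exists h; split => //.
    apply: row_repl_unit => //; rewrite hhg hgj; apply: mconst_unit.
    by apply/eqP => hc0; move: hcase; rewrite hc0 mulr0 subr0 => /eqP; rewrite oner_eq0.
  by rewrite hhs supp_mulmx // /supp hyu; apply: nz_entries_proper hsu hu0 hs00.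
exists (row j Q - mconst m mu *: h); split.
- by apply: homV_add (hrQ j) _; apply: homV_opp; apply: homV_mconstZ.
- apply: row_repl_unit => //.
  rewrite mulmxBl -scalemxAl hhg -row_mul mulmxV // !mxE eqxx hgj -mconstM mulr1n.
  by rewrite -(mconst1 m) -mconstB; apply: mconst_unit.
- have -> : (row j Q - mconst m mu *: h) *m A n = (u - mconst m mu *: s) *m P.
    by rewrite !mulmxBl -!scalemxAl hhs -hyu mulmxKV.
  rewrite supp_mulmx // /supp hyu.
  apply: nz_entries_proper (hsu _ hi1) _ => [i|]; rewrite !mxE //.
  apply: contraNneq => hui.
  have hsi : s 0 i = 0 by apply/eqP/negPn/negP => /hsu; rewrite hui eqxx.
  by rewrite hui hsi mulr0 subrr.
Qed.

Definition hom_basis n (P : 'M[R]_(r n)) : Prop :=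
  P \in unitmx /\ forall i, exists a, homV (shift n) a (row i P).

Definition supp_size n (P : 'M[R]_(r n)) (Q : 'M[R]_(r n.+1)) : nat :=
  \sum_(j < r n.+1) #|supp P (row j Q *m A n)|.

Lemma min_support_lift_bounded n (P : 'M[R]_(r n)) dl :
  P \in unitmx -> (forall i, homV (shift n) (dl i) (row i P)) ->
  forall N (Q : 'M[R]_(r n.+1)) ep, (supp_size P Q < N)%N -> Q \in unitmx ->
  (forall i, homV (shift n.+1) (ep i) (row i Q)) ->
  exists Q' : 'M[R]_(r n.+1), [/\ Q' \in unitmx,
    forall i, homV (shift n.+1) (ep i) (row i Q') &
    forall j, min_supp_cycle A P (row j Q' *m A n)].
Proof.
move=> hP hrP; elim=> [//|N IH] Q ep hN hQ hrQ.
have [hmin|] := classic (forall j, min_supp_cycle A P (row j Q *m A n)); first by exists Q.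
move=> /not_all_ex_not [j hj].
have [w [hw hQw hsupp]] := nonminimal_row_replace hP hrP hQ hrQ hj.
have rowQw i : row i (row_repl Q j w) = if i == j then w else row i Q by rewrite rowK.
apply: (IH (row_repl Q j w) ep) => // [|i]; last by rewrite rowQw; case: eqP => [->|].
suff hlt : (supp_size P (row_repl Q j w) < supp_size P Q)%N by apply: leq_trans hlt _.
rewrite /supp_size (bigD1 j) //= [X in (_ < X)%N](bigD1 j) //=.
rewrite rowQw eqxx; under eq_bigr => i hi do rewrite rowQw (negPf hi).
by rewrite ltn_add2r; apply: proper_card.
Qed.

Lemma min_support_lift n (P : 'M[R]_(r n)) : hom_basis P ->
  exists Q : 'M[R]_(r n.+1), hom_basis Q /\
    forall j, min_supp_cycle A P (row j Q *m A n).
Proof.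
move=> [hP hrow]; have hdl i := constructive_indefinite_description _ (hrow i).
have [Q [hQ hrQ hmin]] := min_support_lift_bounded hP (fun i => proj2_sig (hdl i))
  (ltnSn (supp_size P 1%:M)) (unitmx1 _ _) (@homV_row1 _ _ _ (shift n.+1)).
by exists Q; split => //; split => // i; exists (shift n.+1 i).
Qed.

Lemma exists_min_support_basis (C : 'M[R]_(r 0%N)) : hom_basis C ->
  exists B : forall n, 'M[R]_(r n),
    [/\ B 0%N = C, min_support_basis A B & forall n, hom_basis (B n)].
Proof.
move=> hC.
have lift n (P : {P : 'M[R]_(r n) | hom_basis P}) : {Q : 'M[R]_(r n.+1) |
    hom_basis Q /\ forall j, min_supp_cycle A (sval P) (row j Q *m A n)}.
  by apply: constructive_indefinite_description; apply: min_support_lift (svalP P).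
pose fix basis n : {P : 'M[R]_(r n) | hom_basis P} :=
  if n is n'.+1 then exist _ _ (proj1 (svalP (lift n' (basis n')))) else exist _ C hC.
exists (fun n => sval (basis n)); split => //; last by move=> n; apply: svalP.
split => [n|n j]; first by case: (svalP (basis n)).
exact: (proj2 (svalP (lift n (basis n))) j).
Qed.

End Resolution.

Lemma mcoef_mcoeff (k : fieldType) m (p : mpoly k m) e :
  mcoef p e = mcoeff p (fun i => nth 0%N e i).
Proof.
elim: m p e => [|n IH] p e //=; rewrite IH.
by case: e => [|a e] //=; apply: mcoeff_ext => i _; rewrite !nth_nil.
Qed.

Lemma nth_degshift (e : seq nat) (d : seq int) i : size e = size d -> (i < size e)%N ->
  nth 0 (degshift e d) i = (nth 0%N e i)%:Z + nth 0 d i.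
Proof.
move=> hs hi; rewrite /degshift (nth_map (0%N, 0)) ?size_zip -?hs ?minnn //.
by rewrite nth_zip.
Qed.

Lemma homog_homV (k : fieldType) m q (Dq : 'I_q -> seq int)
  (hq : forall j, size (Dq j) = m) a (y : 'rV[mpoly k m]_q) :
  homog Dq a y -> homV (fun j i => nth 0 (Dq j) i) (fun i => nth 0 a i) y.
Proof.
move=> [ha h] j e he; apply/has_mdegP => i hi /=.
have hs : size (mkseq e m) = m by rewrite size_mkseq.
have hne : mcoef (y 0 j) (mkseq e m) != 0.
  by rewrite mcoef_mcoeff (mcoeff_ext _ (e' := e)) // => l hl; rewrite nth_mkseq.
by rewrite -(h j _ hs hne) nth_degshift ?size_mkseq ?hq // nth_mkseq.
Qed.

Lemma homV_homogeneous (k : fieldType) m q (Dq : 'I_q -> seq int)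
  (hq : forall j, size (Dq j) = m) x (y : 'rV[mpoly k m]_q) :
  homV (fun j i => nth 0 (Dq j) i) x y -> homogeneous Dq y.
Proof.
move=> hx; exists (mkseq x m); split => [|j e he]; first by rewrite size_mkseq.
rewrite mcoef_mcoeff => /hx /has_mdegP hd.
apply: (@eq_from_nth _ 0); first by rewrite size_map size_zip he hq minnn size_mkseq.
move=> i; rewrite size_map size_zip he hq minnn => hi.
by rewrite nth_degshift ?he ?hq // nth_mkseq // hd.
Qed.

Unset Implicit Arguments.
Theorem mainTheorem6 (k : fieldType) (m : nat)
  (r : nat -> nat) (D : forall n, 'I_(r n) -> seq int)
  (A : forall n, 'M[mpoly k m]_(r n.+1, r n))
  (hD : forall n (j : 'I_(r n)), size (D n j) = m)
  (hhom : forall n (j : 'I_(r n.+1)), homog (D n) (D n.+1 j) (row j (A n)))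
  (hexact : forall n (v : 'rV[mpoly k m]_(r n.+1)),
      v *m A n = 0 -> exists w : 'rV[mpoly k m]_(r n.+2), v = w *m A n.+1)
  (hcomplex : forall n, A n.+1 *m A n = 0)
  (hmin : forall n i j, mcoef (A n i j) (nseq m 0%N) = 0)
  (htf : forall (c : mpoly k m) (v : 'rV[mpoly k m]_(r 0%N)), c != 0 ->
      (exists w : 'rV[mpoly k m]_(r 1%N), c *: v = w *m A 0%N) ->
      exists w : 'rV[mpoly k m]_(r 1%N), v = w *m A 0%N)
  (C : 'M[mpoly k m]_(r 0%N)) (hCu : C \in unitmx)
  (hCh : forall j, homogeneous (D 0%N) (row j C)) :
  exists B : forall n, 'M[mpoly k m]_(r n),
    min_support_basis A B /\
    (forall n j, homogeneous (D n) (row j (B n))) /\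
    B 0%N = C.
Proof.
have homV_A n i : homV (shift r D n) (shift r D n.+1 i) (row i (A n)).
  exact: homog_homV (hD n) _ _ (hhom n i).
have hC : hom_basis D C.
  split => // i; have [a ha] := hCh i.
  by exists (fun l => nth 0 a l); apply: homog_homV (hD 0%N) _ _ ha.
have [B [hB0 hBmin hBhom]] := exists_min_support_basis homV_A hexact hcomplex htf hC.
exists B; split => //; split => // n j.
by have [_ /(_ j) [a ha]] := hBhom n; apply: homV_homogeneous (hD n) _ _ ha.
Qed.
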